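(* Let $\mathcal{F}=(M,\{A^u\}_{u\in Q})$ be an FDFA and $\underline{B}$ the Büchi automaton constructed from $\mathcal{F}$ as in the context. Let $u\in\Sigma^*$ and $v\in\Sigma^+$. If $(u,v^k)$ is accepted by $\mathcal{F}$ for every $k\geq1$, then $uv^\omega\in UP(L(\underline{B}))$.
   Context: $\Sigma$ is a finite alphabet. For a complete DFA $A$ and finite word $w$, $A(w)$ is the state reached from the initial state on $w$. An FDFA is $\mathcal{F}=(M,\{A^q\}_{q\in Q})$ with $M=(\Sigma,Q,q_0,\delta)$ a complete DFA without accepting states and each $A^q=(\Sigma,Q_q,s_q,F_q,\delta_q)$ a complete DFA. $(u,v)$ is accepted by $\mathcal{F}$ iff $M(uv)=M(u)$ and $v\in L(A^{M(u)})$. For an $\omega$-language $L'$, $UP(L')$ is the set of ultimately periodic words in $L'$. Construction of $\underline{B}$: for a DFA $D$ and states $s,t$, $D^s_t$ is $D$ with initial state $s$ and accepting set $\{t\}$. For $u\in Q$, $v\in F_u$ let $\underline{P}_{(u,v)}=M^u_u\times(A^u)^{s_u}_v\times(A^u)^v_v$ (synchronous product, single accepting state $f_P$, initial state $s_P$, states $Q_P$, transitions $\delta_P$). From it form the Büchi automaton with $\epsilon$-transitions $(\Sigma,Q_P\cup\{f\},s_P,\{f\},\delta_P\cup\{(f,\epsilon,s_P),(f_P,\epsilon,f)\})$ with $f$ fresh. $\underline{B}$ has state set $Q$ plus disjoint copies of these automata for all $u\in Q$, $v\in F_u$; initial state $q_0$; accepting states the fresh states $f$; transitions $\delta$, those of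 the components, and $\epsilon$-transitions from $u\in Q$ to the initial state of the component for $(u,v)$. An infinite word is accepted if some run (with $\epsilon$-moves) reading it visits accepting states infinitely often. *)

From mathcomp Require Import all_boot.
Set Implicit Arguments. Unset Strict Implicit. Unset Printing Implicit Defensive.

Record dfa (Sigma : finType) := DFA {
  dstate : finType;
  dinit  : dstate;
  dacc   : {set dstate};
  dtrans : dstate -> Sigma -> dstate }.

Definition drun (Sigma : finType) (A : dfa Sigma) (s : dstate A) (w : seq Sigma) :=
  foldl (@dtrans Sigma A) s w.
Definition dreach (Sigma : finType) (A : dfa Sigma) (w : seq Sigma) := drun (dinit A) w.
Definition dlang (Sigma : finType) (A : dfa Sigma) (w : seq Sigma) : Prop :=
  dreach A w \in dacc A.

Record fdfa (Sigma : finType) := FDFA {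
  fQ     : finType;
  fq0    : fQ;
  fdelta : fQ -> Sigma -> fQ;
  fprog  : fQ -> dfa Sigma }.

Definition Mreach (Sigma : finType) (F : fdfa Sigma) (w : seq Sigma) : fQ F :=
  foldl (@fdelta Sigma F) (fq0 F) w.

Definition fdfa_accepts (Sigma : finType) (F : fdfa Sigma) (u v : seq Sigma) : Prop :=
  Mreach F (u ++ v) = Mreach F u /\ dlang (fprog (Mreach F u)) v.

(* Buchi automata with epsilon-transitions (None = epsilon). *)
Record enba (Sigma : finType) := ENBA {
  estate : Type;
  einit  : estate;
  eacc   : estate -> Prop;
  etrans : estate -> option Sigma -> estate -> Prop }.

(* An infinite word w is accepted if some run (with epsilon moves) reading all
   of w visits accepting states infinitely often.  r i is the i-th state of the
   run, l i the label of the i-th move, pos i the number of letters of w read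
   before the i-th move. *)
Definition enba_accepts (Sigma : finType) (B : enba Sigma) (w : nat -> Sigma) : Prop :=
  exists (r : nat -> estate B) (l : nat -> option Sigma) (pos : nat -> nat),
    r 0 = einit B /\ pos 0 = 0 /\
    (forall i, @etrans Sigma B (r i) (l i) (r i.+1)) /\
    (forall i, (l i = None /\ pos i.+1 = pos i) \/
               (l i = Some (w (pos i)) /\ pos i.+1 = (pos i).+1)) /\
    (forall n, exists i, n <= pos i) /\
    (forall n, exists i, n <= i /\ @eacc Sigma B (r i)).

(* w = u v^omega (v nonempty) *)
Definition is_upw (Sigma : finType) (u v : seq Sigma) (w : nat -> Sigma) : Prop :=
  0 < size v /\
  forall n, Some (w n) = if n < size u then onth u n
                         else onth v ((n - size u) %% size v).

Definition UP (Sigma : finType) (L : (nat -> Sigma) -> Prop) (w : nat -> Sigma) : Prop :=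
  (exists u v, is_upw u v w) /\ L w.

Section Construction.
Variables (Sigma : finType) (F : fdfa Sigma).

Definition St (u : fQ F) := dstate (fprog u).
Definition AccSt (u : fQ F) := {x : St u | x \in dacc (fprog u)}.

(* states of P_(u,v) = M^u_u x (A^u)^{s_u}_v x (A^u)^v_v *)
Definition Pstate (u : fQ F) := (fQ F * St u * St u)%type.
Definition Pinit (u : fQ F) (v : AccSt u) : Pstate u := (u, dinit (fprog u), sval v).
Definition Pfin (u : fQ F) (v : AccSt u) : Pstate u := (u, sval v, sval v).
Definition Ptrans (u : fQ F) (p : Pstate u) (a : Sigma) : Pstate u :=
  (fdelta p.1.1 a, dtrans p.1.2 a, dtrans p.2 a).

Inductive bstate :=
| BQ of fQ F
| BP (u : fQ F) (v : AccSt u) of Pstate u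
| BF (u : fQ F) of AccSt u.

Inductive btrans : bstate -> option Sigma -> bstate -> Prop :=
| bt_M q a : btrans (BQ q) (Some a) (BQ (fdelta q a))
| bt_P u (v : AccSt u) (p : Pstate u) a : btrans (BP v p) (Some a) (BP v (Ptrans p a))
| bt_f_init u (v : AccSt u) : btrans (BF v) None (BP v (Pinit v))
| bt_fin_f u (v : AccSt u) : btrans (BP v (Pfin v)) None (BF v)
| bt_enter u (v : AccSt u) : btrans (BQ u) None (BP v (Pinit v)).

Definition bacc (s : bstate) : Prop := if s is BF _ _ then True else False.

Definition underlineB : enba Sigma := ENBA (BQ (fq0 F)) bacc btrans.
End Construction.

From Pilot Require Import Defs.
From mathcomp Require Import all_boot.
From mathcomp Require Import zify.

(* Since A := A^{M(u)} is finite, some power V = v^e (e > 0) acts idempotently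
   on its initial state: t := A(V) satisfies t --V--> t.  As (u, V) is
   accepted, t is accepting and M loops on V at M(u), so in the copy for
   (M(u), t) the word V leads from the initial state (M(u), s, t) to the final
   state (M(u), t, t).  Hence B has the lasso run
   q0 --u--> M(u) --eps--> P --V--> f --eps--> P --V--> f --> ...
   through the accepting state f, and it reads u V^omega = u v^omega. *)

Set Implicit Arguments.
Unset Strict Implicit.
Unset Printing Implicit Defensive.

Lemma size_flatten_nseq (T : Type) (s : seq T) n :
  size (flatten (nseq n s)) = n * size s.
Proof. by rewrite size_flatten /shape map_nseq sumn_nseq mulnC. Qed.

Lemma flatten_nseqM (T : Type) (s : seq T) m n :
  flatten (nseq n (flatten (nseq m s))) = flatten (nseq (n * m) s).
Proof. by elim: n => //= n IH; rewrite IH mulSn nseqD flatten_cat. Qed.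

Lemma onth_flatten_nseq (T : Type) (s : seq T) n k a :
  onth (flatten (nseq n s)) k = Some a -> onth s (k %% size s) = Some a.
Proof.
elim: n k => [|n IH] k /=; first by rewrite onth0n.
rewrite onth_cat; case: ltnP => [lt_ks | le_sk]; first by rewrite modn_small.
by move/IH; rewrite -{2}(subnK le_sk) modnDr.
Qed.

Lemma foldl_flatten_nseq (S T : Type) (f : S -> T -> S) x s n :
  foldl f x (flatten (nseq n s)) = iter n (foldl f ^~ s) x.
Proof. by elim: n x => // n IH x; rewrite iterSr -IH -foldl_cat. Qed.

Lemma iter_idempotent (T : finType) (f : T -> T) x :
  exists2 e, 0 < e & iter (e + e) f x = iter e f x.
Proof.
have /trajectP[i lt_io iter_o] := looping_order f x.
set o := order f x in lt_io iter_o; set d := o - i.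
have iter_period n : i <= n -> iter (n + d) f x = iter n f x.
  move=> le_in; rewrite -(subnK le_in) -addnA subnKC ?(ltnW lt_io) //.
  by rewrite !iterD iter_o.
have iter_periodM n c : i <= n -> iter (n + c * d) f x = iter n f x.
  move=> le_in; elim: c => [|c IH]; first by rewrite addn0.
  by rewrite mulSn addnCA addnC iter_period ?IH //; lia.
exists (i.+1 * d); first by rewrite muln_gt0 subn_gt0 lt_io.
by apply: iter_periodM; rewrite /d; nia.
Qed.

Definition prefix_of (Sigma : Type) (s : seq Sigma) (w : nat -> Sigma) :=
  forall k a, onth s k = Some a -> w k = a.

Lemma upw_prefix (Sigma : finType) (u v : seq Sigma) w n :
  is_upw u v w -> prefix_of (u ++ flatten (nseq n v)) w.
Proof.
move=> [_ w_upw] k a; rewrite onth_cat; have := w_upw k.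
case: ltnP => [_ <- [] // | _ w_k onth_a].
by move: w_k; rewrite (onth_flatten_nseq onth_a) => -[].
Qed.

Section FiniteRuns.
Variables (Sigma : finType) (B : enba Sigma).
Local Notation state := (estate B).
Local Notation move := (option Sigma * state)%type.

(* [Defs.etrans]: ssrfun's [etrans] shadows the transition relation. *)
Fixpoint epath (x : state) (ms : seq move) : Prop :=
  if ms is m :: ms' then Defs.etrans x m.1 m.2 /\ epath m.2 ms' else True.

Definition etarget (x : state) (ms : seq move) : state := last x (unzip2 ms).

Definition eword (ms : seq move) : seq Sigma := pmap fst ms.

Lemma etarget_cat x ms1 ms2 :
  etarget x (ms1 ++ ms2) = etarget (etarget x ms1) ms2.
Proof. by rewrite /etarget /unzip2 map_cat last_cat. Qed.

Lemma etarget_rcons x ms m : etarget x (rcons ms m) = m.2.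
Proof. by rewrite /etarget /unzip2 map_rcons last_rcons. Qed.

Lemma epath_cat x ms1 ms2 :
  epath x (ms1 ++ ms2) <-> epath x ms1 /\ epath (etarget x ms1) ms2.
Proof. by elim: ms1 x => [|m ms1 IH] x /=; [tauto | have := IH m.2; tauto]. Qed.

Lemma epath_nth x ms d i : epath x ms -> i < size ms ->
  Defs.etrans (etarget x (take i ms)) (nth d ms i).1 (nth d ms i).2.
Proof.
move=> + lt_i; rewrite -{1}(cat_take_drop i ms) (drop_nth d lt_i).
by case/epath_cat => _ [].
Qed.

Lemma eword_nth ms d i a : i < size ms -> (nth d ms i).1 = Some a ->
  onth (eword ms) (size (eword (take i ms))) = Some a.
Proof.
move=> lt_i nth_a; rewrite -{1}(cat_take_drop i ms) (drop_nth d lt_i).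
by rewrite /eword pmap_cat onth_cat ltnn subnn /= nth_a.
Qed.

Inductive ereach : state -> seq Sigma -> state -> Prop :=
| ereach_nil x : ereach x [::] x
| ereach_letter x a y s z :
    Defs.etrans x (Some a) y -> ereach y s z -> ereach x (a :: s) z
| ereach_eps x y s z : Defs.etrans x None y -> ereach y s z -> ereach x s z.

Lemma ereach_cat x s y t z :
  ereach x s y -> ereach y t z -> ereach x (s ++ t) z.
Proof.
elim=> // [x' a y' s' z' | x' y' s' z'] step _ IH yz.
  exact: ereach_letter step (IH yz).
exact: ereach_eps step (IH yz).
Qed.

Lemma ereach_moves x s y : ereach x s y ->
  exists ms, [/\ epath x ms, etarget x ms = y & eword ms = s].
Proof.
elim=> [x' | x' a y' s' z' step _ [ms [path_ms target_ms <-]]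
           | x' y' s' z' step _ [ms [path_ms target_ms <-]]].
- by exists [::].
- by exists ((Some a, y') :: ms).
- by exists ((None, y') :: ms).
Qed.

Section Lasso.
Variables (p : state) (pre cyc : seq move) (w : nat -> Sigma).
Hypotheses (pre_path : epath (einit B) pre)
  (pre_target : etarget (einit B) pre = p).
Hypotheses (cyc_path : epath p cyc) (cyc_target : etarget p cyc = p).
Hypotheses (p_acc : eacc p) (cyc_word : 0 < size (eword cyc)).
Hypothesis w_lasso :
  forall n, prefix_of (eword pre ++ flatten (nseq n (eword cyc))) w.

Let lasso n := pre ++ flatten (nseq n cyc).

Let lassoD m n : lasso (m + n) = lasso m ++ flatten (nseq n cyc).
Proof. by rewrite /lasso nseqD flatten_cat catA. Qed.

Let size_lasso n : n <= size (lasso n).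
Proof.
have : 0 < size cyc by apply: leq_trans cyc_word _; rewrite size_pmap count_size.
by rewrite size_cat size_flatten_nseq; nia.
Qed.

Let lasso_run n : epath (einit B) (lasso n) /\ etarget (einit B) (lasso n) = p.
Proof.
elim: n => [|n [path_n target_n]]; first by rewrite /lasso cats0.
rewrite -addn1 lassoD /= cats0 etarget_cat target_n cyc_target.
by split=> //; apply/epath_cat; rewrite target_n.
Qed.

Let eword_lasso n : eword (lasso n) = eword pre ++ flatten (nseq n (eword cyc)).
Proof.
by rewrite /eword pmap_cat; congr cat; elim: n => //= n <-; rewrite pmap_cat.
Qed.

Let take_lasso n i : i <= size (lasso n) -> take i (lasso n) = take i (lasso i).
Proof.
move=> le_i; rewrite -(takel_cat (flatten (nseq i cyc)) le_i) -lassoD addnC.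
by rewrite lassoD takel_cat.
Qed.

(* As [lasso n] has at least n moves, [run i] and [mv i] are the first i moves
   and the i-th move of the infinite run pre cyc cyc ... *)
Let run i := take i (lasso i).
Let mv i := nth (None, einit B) (lasso i.+1) i.

Let run_next i : run i.+1 = rcons (run i) (mv i).
Proof.
by rewrite /run (take_nth (None, einit B) (size_lasso i.+1)) take_lasso // ltnW.
Qed.

Lemma lasso_accepts : enba_accepts B w.
Proof.
exists (fun i => etarget (einit B) (run i)), (fun i => (mv i).1),
  (fun i => size (eword (run i))).
do 2 (split; first by rewrite /run take0).
have lt_i i : i < size (lasso i.+1) by apply: size_lasso.
split.
  move=> i; rewrite run_next etarget_rcons /run -(take_lasso (ltnW (lt_i i))).
  exact: epath_nth (proj1 (lasso_run _)) (lt_i i).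
split.
  move=> i; rewrite run_next /eword -cats1 pmap_cat size_cat /=.
  case mv_a: (mv i).1 => [a|] /=; [right | by left; rewrite addn0].
  rewrite addn1; split=> //; congr Some.
  have := eword_nth (lt_i i) mv_a; rewrite take_lasso ?(ltnW (lt_i i)) //.
  by rewrite eword_lasso => /w_lasso.
have run_lasso n : run (size (lasso n)) = lasso n.
  by rewrite /run -(@take_lasso n) // take_size.
split=> n; exists (size (lasso n)); rewrite run_lasso.
  by rewrite eword_lasso size_cat size_flatten_nseq; nia.
by split; [exact: size_lasso | rewrite (proj2 (lasso_run n))].
Qed.

End Lasso.

Theorem enba_accepts_lasso p wpre wcyc w :
  ereach (einit B) wpre p -> ereach p wcyc p -> eacc p -> 0 < size wcyc ->
  (forall n, prefix_of (wpre ++ flatten (nseq n wcyc)) w) -> enba_accepts B w.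
Proof.
move=> /ereach_moves[pre [pre_path pre_target <-]].
move=> /ereach_moves[cyc [cyc_path cyc_target <-]].
exact: lasso_accepts.
Qed.

End FiniteRuns.

Arguments ereach {Sigma} B.

Section UnderlineB.
Variables (Sigma : finType) (F : fdfa Sigma).

Lemma foldl_Ptrans q (x : Pstate q) s :
  foldl (@Ptrans _ F q) x s =
  (foldl (@fdelta _ F) x.1.1 s, foldl (@dtrans _ (fprog q)) x.1.2 s,
   foldl (@dtrans _ (fprog q)) x.2 s).
Proof. by elim: s x => [|a s IH] [[? ?] ?] //=; rewrite IH. Qed.

Lemma ereach_M q s :
  ereach (underlineB F) (BQ q) s (BQ (foldl (@fdelta _ F) q s)).
Proof.
elim: s q => [|a s IH] q; first exact: ereach_nil.
by apply: (ereach_letter _ (IH _)); apply: bt_M.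
Qed.

Lemma ereach_P q (t : AccSt q) x s :
  ereach (underlineB F) (BP t x) s (BP t (foldl (@Ptrans _ F q) x s)).
Proof.
elim: s x => [|a s IH] x; first exact: ereach_nil.
by apply: (ereach_letter _ (IH _)); apply: bt_P.
Qed.

Lemma ereach_round q (t : AccSt q) s :
  foldl (@Ptrans _ F q) (Pinit t) s = Pfin t ->
  ereach (underlineB F) (BP t (Pinit t)) s (BF t).
Proof.
move=> round; rewrite -[s]cats0; apply: ereach_cat (ereach_P _ _ _) _.
by rewrite round; apply: (ereach_eps _ (ereach_nil _)); apply: bt_fin_f.
Qed.

End UnderlineB.

Theorem lemma4 (Sigma : finType) (F : fdfa Sigma) (u v : seq Sigma) :
  0 < size v ->
  (forall k, 0 < k -> fdfa_accepts F u (flatten (nseq k v))) ->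
  forall w : nat -> Sigma, is_upw u v w -> UP (enba_accepts (underlineB F)) w.
Proof.
move=> v_gt0 acc_pow w w_upw; split; first by exists u, v.
set q := Mreach F u; set A := fprog q.
have [e e_gt0 idem] := iter_idempotent (foldl (@dtrans _ A) ^~ v) (dinit A).
set V := flatten (nseq e v).
have [loopM accV] := acc_pow e e_gt0.
pose t : AccSt q := exist _ (dreach A V) accV.
have loopA : foldl (@dtrans _ A) (dreach A V) V = dreach A V.
  rewrite /dreach /drun -foldl_cat -flatten_cat -nseqD.
  by rewrite !foldl_flatten_nseq idem.
have round : foldl (@Ptrans _ F q) (Pinit t) V = Pfin t.
  by move: loopM; rewrite foldl_Ptrans /Mreach foldl_cat /= => ->; rewrite loopA.
apply: (@enba_accepts_lasso _ (underlineB F) (BF t) (u ++ V) V).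
- apply: ereach_cat (ereach_M _ _) _.
  by apply: (ereach_eps _ (ereach_round round)); apply: bt_enter.
- by apply: (ereach_eps _ (ereach_round round)); apply: bt_f_init.
- by [].
- by rewrite size_flatten_nseq muln_gt0 e_gt0.
- by move=> n; rewrite -catA flatten_nseqM -flatten_cat -nseqD; apply: upw_prefix.
Qed.
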